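(* Let $H$ be a complex infinite-dimensional separable Hilbert space, and let $(f_n)_{n=1}^\infty$ and $(g_n)_{n=1}^\infty$ be Bessel sequences in $H$ with optimal Bessel bounds $B$ and $D$ and analysis operators $U$ and $V$, respectively. Suppose $I-V^*U$ is a compact operator on $H$. Then there exist finite sequences $(x_n)_{n=1}^k$ and $(y_n)_{n=1}^l$ in $H$ such that $(x_n)_{n=1}^k\cup(f_n)_{n=1}^\infty$ is a frame for $H$ with optimal upper frame bound $B$, and $(y_n)_{n=1}^l\cup(g_n)_{n=1}^\infty$ is a frame for $H$ with optimal upper frame bound $D$.
   Context: A Bessel sequence $(f_n)$ in $H$: there is $B>0$ with $\sum_n|\langle x,f_n\rangle|^2\le B\|x\|^2$ for all $x$; the optimal Bessel bound is the infimum of all such $B$. A frame additionally has a lower bound $A>0$ with $A\|x\|^2\le\sum_n|\langle x,f_n\rangle|^2$; the optimal upper frame bound is the infimum of upper bounds. The analysis operator is $U:H\to\ell^2$, $Ux=(\langle x,f_n\rangle)_n$. The notation $(x_n)_{n=1}^k\cup(f_n)_{n=1}^\infty$ denotes the sequence $x_1,\dots,x_k,f_1,f_2,\dots$. *)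

From Stdlib Require Import Reals Lra List.
Open Scope R_scope.

Record C := mkC { Re : R ; Im : R }.
Definition C0 : C := mkC 0 0.
Definition C1 : C := mkC 1 0.
Definition Cadd (a b : C) : C := mkC (Re a + Re b) (Im a + Im b).
Definition Cmul (a b : C) : C :=
  mkC (Re a * Re b - Im a * Im b) (Re a * Im b + Im a * Re b).
Definition Cconj (a : C) : C := mkC (Re a) (- Im a).
Definition Cnorm2 (a : C) : R := Re a * Re a + Im a * Im a.

(** * Complex Hilbert spaces (inner product linear in the first argument) *)
Record CHilbert := {
  vec :> Type;
  hzero : vec;
  hadd : vec -> vec -> vec;
  hopp : vec -> vec;
  hscal : C -> vec -> vec;
  hinner : vec -> vec -> C;
  hadd_assoc : forall x y z, hadd x (hadd y z) = hadd (hadd x y) z;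
  hadd_comm : forall x y, hadd x y = hadd y x;
  hadd_zero : forall x, hadd x hzero = x;
  hadd_opp : forall x, hadd x (hopp x) = hzero;
  hscal_assoc : forall a b x, hscal a (hscal b x) = hscal (Cmul a b) x;
  hscal_one : forall x, hscal C1 x = x;
  hscal_distr_v : forall a x y, hscal a (hadd x y) = hadd (hscal a x) (hscal a y);
  hscal_distr_s : forall a b x, hscal (Cadd a b) x = hadd (hscal a x) (hscal b x);
  hinner_conj : forall x y, hinner y x = Cconj (hinner x y);
  hinner_add_l : forall x y z, hinner (hadd x y) z = Cadd (hinner x z) (hinner y z);
  hinner_scal_l : forall a x y, hinner (hscal a x) y = Cmul a (hinner x y);
  hinner_pos : forall x, 0 <= Re (hinner x x);
  hinner_def : forall x, Re (hinner x x) = 0 -> x = hzero;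
  hcomplete : forall u : nat -> vec,
    (forall eps, eps > 0 -> exists N, forall m n, (N <= m)%nat -> (N <= n)%nat ->
        sqrt (Re (hinner (hadd (u m) (hopp (u n))) (hadd (u m) (hopp (u n))))) < eps) ->
    exists l, forall eps, eps > 0 -> exists N, forall n, (N <= n)%nat ->
        sqrt (Re (hinner (hadd (u n) (hopp l)) (hadd (u n) (hopp l)))) < eps
}.

Arguments hzero {c}.
Arguments hadd {c}.
Arguments hopp {c}.
Arguments hscal {c}.
Arguments hinner {c}.

Section HilbertDefs.
Variable H : CHilbert.

Definition hsub (x y : H) : H := hadd x (hopp y).
Definition hnorm (x : H) : R := sqrt (Re (hinner x x)).

Definition hconverges (u : nat -> H) (l : H) : Prop :=
  forall eps, eps > 0 -> exists N, forall n, (N <= n)%nat -> hnorm (hsub (u n) l) < eps.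

Definition separable : Prop :=
  exists d : nat -> H, forall x eps, eps > 0 -> exists n, hnorm (hsub x (d n)) < eps.

Fixpoint lincomb (n : nat) (c : nat -> C) (v : nat -> H) : H :=
  match n with
  | O => hzero
  | S m => hadd (lincomb m c v) (hscal (c m) (v m))
  end.

Definition infinite_dimensional : Prop :=
  forall (n : nat) (v : nat -> H), exists x : H, forall c : nat -> C, x <> lincomb n c v.

Definition bessel_bound (f : nat -> H) (B : R) : Prop :=
  B > 0 /\ forall x : H, exists l,
    infinite_sum (fun n => Cnorm2 (hinner x (f n))) l /\ l <= B * (hnorm x)^2.

Definition is_bessel (f : nat -> H) : Prop := exists B, bessel_bound f B.

Definition lower_frame_bound (f : nat -> H) (A : R) : Prop :=
  A > 0 /\ forall x : H, exists l,
    infinite_sum (fun n => Cnorm2 (hinner x (f n))) l /\ A * (hnorm x)^2 <= l.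

Definition is_frame (f : nat -> H) : Prop :=
  (exists A, lower_frame_bound f A) /\ (exists B, bessel_bound f B).

Definition is_glb (E : R -> Prop) (m : R) : Prop :=
  (forall x, E x -> m <= x) /\ (forall m', (forall x, E x -> m' <= x) -> m' <= m).

Definition optimal_bessel_bound (f : nat -> H) (B : R) : Prop :=
  is_glb (bessel_bound f) B.

Definition optimal_upper_frame_bound (f : nat -> H) (B : R) : Prop :=
  is_glb (bessel_bound f) B.

Definition analysis (f : nat -> H) (x : H) : nat -> C := fun n => hinner x (f n).

(** synthesis (adjoint of the analysis operator of g): V^* c = sum_n c_n g_n,
    the series converging in norm to y *)
Definition synthesis_is (g : nat -> H) (c : nat -> C) (y : H) : Prop :=
  hconverges (fun N => lincomb N c g) y.

Definition hbounded (u : nat -> H) : Prop := exists M, forall n, hnorm (u n) <= M.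

Definition linear_op (T : H -> H) : Prop :=
  (forall x y, T (hadd x y) = hadd (T x) (T y)) /\
  (forall a x, T (hscal a x) = hscal a (T x)).

Definition compact_op (T : H -> H) : Prop :=
  linear_op T /\
  forall u : nat -> H, hbounded u ->
    exists (phi : nat -> nat) (l : H),
      (forall n, (phi n < phi (S n))%nat) /\ hconverges (fun n => T (u (phi n))) l.

Definition prepend (xs : list H) (f : nat -> H) : nat -> H :=
  fun n => if Nat.ltb n (length xs) then nth n xs hzero else f (n - length xs)%nat.

End HilbertDefs.

Arguments hsub {H}.
Arguments hnorm {H}.

(* Write S_a x = sum_n |<x, a_n>|^2 for the energy of a sequence a at x, and
   let T = I - V^*U be compact.  Cauchy-Schwarz for the synthesis series gives
   |Re <x - Tx, y>| <= sqrt (S_f x) sqrt (S_g y); polarising it yields, for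
   Bessel bounds B0 of f and D0 of g, the two control estimates
       ||x - y||^2 <= 2 ||Tx - Ty||^2 + 4 D0 (S_f x + S_f y),
       ||x - y||^2 <= 2 ||Tx - Ty||^2 + 4 B0 (S_g x + S_g y).
   From then on f and g play the same role: for a Bessel sequence a controlled
   in this way by a compact T, the kernel {z | z _|_ a_n for all n} of the
   analysis operator contains no infinite orthonormal sequence, so it has a
   finite orthonormal basis e_1..e_n; and unit vectors of vanishing energy have
   a subsequence converging into that kernel.  Prepending sqrt B e_1, ...,
   sqrt B e_n (B the optimal bound) makes the kernel trivial, hence gives a
   lower frame bound, while Bessel's identity for e keeps the optimal upper
   bound equal to B; infinite dimensionality ensures B > 0. *)

From Stdlib Require Import Reals Lra Lia List ClassicalEpsilon Classical.
Open Scope R_scope.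

Lemma Rabs_le_inv (a b : R) : Rabs a <= b -> -b <= a <= b.
Proof. intro E. pose proof (Rle_abs a). pose proof (Rle_abs (-a)). rewrite Rabs_Ropp in *. lra. Qed.

Lemma C_ext (a b : C) : Re a = Re b -> Im a = Im b -> a = b.
Proof. destruct a, b; simpl; intros; subst; reflexivity. Qed.

Lemma Cnorm2_nonneg (a : C) : 0 <= Cnorm2 a.
Proof. unfold Cnorm2. nra. Qed.

Lemma Cnorm2_zero (a : C) : Cnorm2 a <= 0 -> a = C0.
Proof. unfold Cnorm2; intro. destruct a as [x y]; simpl in *. apply C_ext; simpl; nra. Qed.

Lemma Cnorm2_conj (z : C) : Cnorm2 (Cconj z) = Cnorm2 z.
Proof. unfold Cnorm2, Cconj; simpl. ring. Qed.

Lemma Re_Cmul_young (a b : C) t :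
  t > 0 -> Rabs (Re (Cmul a b)) <= (t * Cnorm2 a + Cnorm2 b / t) / 2.
Proof.
  intro ht. destruct a as [a1 a2], b as [b1 b2]. unfold Cnorm2, Cmul; simpl.
  assert (Sq : forall u v, t * (u * u) - 2 * u * v + v * v / t
                          = / t * ((t * u - v) * (t * u - v)))
    by (intros; field; lra).
  assert (Pos : forall u v, 0 <= / t * ((t * u - v) * (t * u - v))).
  { intros. apply Rmult_le_pos. apply Rlt_le, Rinv_0_lt_compat; lra. apply Rle_0_sqr. }
  pose proof (Sq a1 b1); pose proof (Pos a1 b1); pose proof (Sq a1 (-b1)); pose proof (Pos a1 (-b1)).
  pose proof (Sq a2 b2); pose proof (Pos a2 b2); pose proof (Sq a2 (-b2)); pose proof (Pos a2 (-b2)).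
  apply Rabs_le. unfold Rdiv in *. split; lra.
Qed.

Section InnerProduct.
Context {H : CHilbert}.

Definition N (x : H) : R := Re (hinner x x).
Definition rs (l : R) (x : H) : H := hscal (mkC l 0) x.

Lemma hadd_0_l (x : H) : hadd hzero x = x.
Proof. rewrite hadd_comm. apply hadd_zero. Qed.

Lemma hadd_cancel (a : H) : hadd a a = a -> a = hzero.
Proof.
  intro E. rewrite <- (hadd_opp _ a). rewrite <- E at 2.
  rewrite <- hadd_assoc, hadd_opp, hadd_zero. reflexivity.
Qed.

Lemma hopp_unique (a b : H) : hadd a b = hzero -> b = hopp a.
Proof.
  intro E. rewrite <- (hadd_zero _ b). rewrite <- (hadd_opp _ a).
  rewrite hadd_assoc, (hadd_comm _ b a), E, hadd_0_l. reflexivity.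
Qed.

Lemma hsub_add_cancel (x y : H) : hadd (hsub x y) y = x.
Proof.
  unfold hsub. rewrite <- hadd_assoc, (hadd_comm _ (hopp y) y), hadd_opp, hadd_zero.
  reflexivity.
Qed.

Lemma hsub_eq_zero (x y : H) : hsub x y = hzero -> x = y.
Proof. intro E. rewrite <- (hsub_add_cancel x y), E. apply hadd_0_l. Qed.

Lemma hinner_zero_l (y : H) : hinner hzero y = C0.
Proof.
  assert (E : hinner (hadd hzero hzero) y = hinner hzero y) by (rewrite hadd_zero; auto).
  rewrite hinner_add_l in E. apply C_ext; simpl.
  - apply (f_equal Re) in E. simpl in E. lra.
  - apply (f_equal Im) in E. simpl in E. lra.
Qed.

Lemma hinner_zero_r (y : H) : hinner y hzero = C0.
Proof. rewrite hinner_conj, hinner_zero_l. apply C_ext; simpl; ring. Qed.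

Lemma hinner_opp_l (a b : H) :
  hinner (hopp a) b = mkC (- Re (hinner a b)) (- Im (hinner a b)).
Proof.
  assert (E : hinner (hadd a (hopp a)) b = C0) by (rewrite hadd_opp; apply hinner_zero_l).
  rewrite hinner_add_l in E. apply C_ext; simpl.
  - apply (f_equal Re) in E. simpl in E. lra.
  - apply (f_equal Im) in E. simpl in E. lra.
Qed.

Lemma hinner_add_r (a b c : H) :
  hinner a (hadd b c) = Cadd (hinner a b) (hinner a c).
Proof.
  rewrite hinner_conj, hinner_add_l, (hinner_conj _ b a), (hinner_conj _ c a).
  apply C_ext; simpl; ring.
Qed.

Lemma hinner_opp_r (a b : H) :
  hinner a (hopp b) = mkC (- Re (hinner a b)) (- Im (hinner a b)).
Proof.
  rewrite hinner_conj, hinner_opp_l, (hinner_conj _ b a). apply C_ext; simpl; ring.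
Qed.

Lemma hinner_scal_r (c : C) (a b : H) :
  hinner a (hscal c b) = Cmul (Cconj c) (hinner a b).
Proof.
  rewrite hinner_conj, hinner_scal_l, (hinner_conj _ b a). apply C_ext; simpl; ring.
Qed.

Lemma Re_sym (a b : H) : Re (hinner b a) = Re (hinner a b).
Proof. rewrite hinner_conj. reflexivity. Qed.

Lemma Im_sym (a b : H) : Im (hinner b a) = - Im (hinner a b).
Proof. rewrite hinner_conj. reflexivity. Qed.

Lemma Im_self (x : H) : Im (hinner x x) = 0.
Proof. pose proof (Im_sym x x). lra. Qed.

Lemma N_nonneg (x : H) : 0 <= N x.
Proof. apply hinner_pos. Qed.

Lemma N_zero (x : H) : N x = 0 -> x = hzero.
Proof. apply hinner_def. Qed.

Lemma N_hzero : N (@hzero H) = 0.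
Proof. unfold N. rewrite hinner_zero_l. reflexivity. Qed.

Lemma hnorm_sq (x : H) : (hnorm x)^2 = N x.
Proof. unfold hnorm. apply pow2_sqrt. apply N_nonneg. Qed.

Lemma hnorm_lt (w : H) e : e > 0 -> N w < e * e -> hnorm w < e.
Proof.
  intros He Hw. unfold hnorm. fold (N w). rewrite <- (sqrt_square e) by lra.
  apply sqrt_lt_1_alt. split. apply N_nonneg. auto.
Qed.

Lemma hnorm_lt_inv (w : H) e : hnorm w < e -> N w < e * e.
Proof.
  intro Hw. rewrite <- hnorm_sq. simpl. assert (0 <= hnorm w) by apply sqrt_pos. nra.
Qed.

Lemma bounded_of_N_le_1 (u : nat -> H) : (forall n, N (u n) <= 1) -> hbounded H u.
Proof.
  intro Hu. exists 1. intro n. unfold hnorm. rewrite <- sqrt_1.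
  apply sqrt_le_1_alt. apply Hu.
Qed.

End InnerProduct.

Hint Rewrite @hinner_add_l @hinner_add_r @hinner_opp_l @hinner_opp_r
  @hinner_scal_l @hinner_scal_r @hinner_zero_l @hinner_zero_r : ip.

Ltac ipsimpl := unfold hsub, N, rs in *; autorewrite with ip in *; simpl in *.

Section Norms.
Context {H : CHilbert}.

Lemma N_sub (a b : H) : N (hsub a b) = N a - 2 * Re (hinner a b) + N b.
Proof. ipsimpl. rewrite (Re_sym a b). lra. Qed.

Lemma N_sub_sym (x y : H) : N (hsub x y) = N (hsub y x).
Proof. rewrite !N_sub, (Re_sym x y). ring. Qed.

Lemma N_rs (l : R) (x : H) : N (rs l x) = l * l * N x.
Proof. ipsimpl. rewrite Im_self. ring. Qed.

Lemma Cnorm2_rs_l (l : R) (x y : H) :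
  Cnorm2 (hinner (rs l x) y) = l * l * Cnorm2 (hinner x y).
Proof. unfold Cnorm2. ipsimpl. ring. Qed.

Lemma Cnorm2_rs_r (l : R) (x y : H) :
  Cnorm2 (hinner x (rs l y)) = l * l * Cnorm2 (hinner x y).
Proof. unfold Cnorm2. ipsimpl. ring. Qed.

Lemma normalize (z : H) : z <> hzero -> exists l, l <> 0 /\ N (rs l z) = 1.
Proof.
  intro Hz. assert (Np : N z > 0).
  { pose proof (N_nonneg z). destruct (Req_dec (N z) 0) as [E|E].
    - apply N_zero in E. contradiction.
    - lra. }
  pose proof (sqrt_lt_R0 _ Np) as Sp. pose proof (sqrt_sqrt (N z) ltac:(lra)) as Ss.
  exists (/ sqrt (N z)). split.
  - apply Rinv_neq_0_compat. lra.
  - rewrite N_rs. rewrite <- Ss at 3. field. lra.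
Qed.

Lemma cauchy_schwarz (a b : H) : Rabs (Re (hinner a b)) <= sqrt (N a) * sqrt (N b).
Proof.
  set (r := Re (hinner a b)).
  assert (Hq : forall l, 0 <= N a - 2 * l * r + l * l * N b).
  { intro l. pose proof (N_nonneg (hsub a (rs l b))) as P.
    rewrite N_sub, N_rs in P. unfold rs in P. ipsimpl. unfold r. nra. }
  pose proof (N_nonneg b). pose proof (N_nonneg a).
  destruct (Req_dec (N b) 0) as [Hb|Hb].
  - assert (r = 0).
    { destruct (Req_dec r 0) as [|Hr]; auto.
      specialize (Hq ((N a + 1) / (2 * r))). rewrite Hb in Hq.
      assert (2 * ((N a + 1) / (2 * r)) * r = N a + 1) by (field; auto).
      nra. }
    rewrite H2, Rabs_R0. apply Rmult_le_pos; apply sqrt_pos.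
  - assert (r * r <= N a * N b).
    { specialize (Hq (r / N b)).
      assert (E : N a - 2 * (r / N b) * r + r / N b * (r / N b) * N b = N a - r * r / N b)
        by (field; lra).
      rewrite E in Hq.
      assert (r * r / N b * N b <= N a * N b) by (apply Rmult_le_compat_r; lra).
      replace (r * r / N b * N b) with (r * r) in * by (field; lra). lra. }
    rewrite <- sqrt_mult by lra. rewrite <- sqrt_Rsqr_abs. apply sqrt_le_1_alt.
    unfold Rsqr. lra.
Qed.

Lemma N_sub_le (u v : H) : N u <= 2 * N v + 2 * N (hsub u v).
Proof.
  pose proof (N_nonneg (hsub u (hadd v v))).
  pose proof (Re_sym u v). ipsimpl. lra.
Qed.

Lemma N_sub_via (a b l : H) : N (hsub a b) <= 2 * N (hsub a l) + 2 * N (hsub b l).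
Proof.
  pose proof (N_nonneg (hadd (hsub a l) (hsub b l))).
  pose proof (Re_sym a b); pose proof (Re_sym a l); pose proof (Re_sym b l). ipsimpl. lra.
Qed.

Lemma Re_inner_le (u d : H) : Re (hinner u d) <= N u + N d / 4.
Proof.
  pose proof (N_nonneg (hsub (hadd u u) d)).
  pose proof (Re_sym u d). ipsimpl. lra.
Qed.

Lemma linear_sub (T : H -> H) : linear_op H T -> forall x y, T (hsub x y) = hsub (T x) (T y).
Proof.
  intros [Ha Hs] x y. unfold hsub. rewrite Ha. f_equal.
  apply hopp_unique. rewrite <- Ha, hadd_opp.
  apply hadd_cancel. rewrite <- Ha, hadd_zero. reflexivity.
Qed.

End Norms.

(* Finite sums [rsum n s = s 0 + ... + s (n-1)] and the Stdlib's series
   [infinite_sum] (whose partial sums [sum_f_R0 s n] have n+1 terms). *)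
Fixpoint rsum (n : nat) (s : nat -> R) : R :=
  match n with O => 0 | S m => rsum m s + s m end.

Lemma rsum_S (n : nat) (s : nat -> R) : rsum (S n) s = sum_f_R0 s n.
Proof. induction n; simpl in *; [ring|]. rewrite <- IHn. simpl. ring. Qed.

Lemma rsum_shift (g : nat -> R) k : rsum (S k) g = g O + rsum k (fun i => g (S i)).
Proof. induction k; simpl in *. ring. rewrite IHk. ring. Qed.

Lemma rsum_scal (g : nat -> R) c k : rsum k (fun i => c * g i) = c * rsum k g.
Proof. induction k; simpl. ring. rewrite IHk. ring. Qed.

Lemma rsum_nonneg (g : nat -> R) k : (forall i, 0 <= g i) -> 0 <= rsum k g.
Proof. intro G. induction k; simpl. lra. specialize (G k). lra. Qed.

Lemma rsum_ext (g h : nat -> R) k : (forall i, g i = h i) -> rsum k g = rsum k h.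
Proof. intro E. induction k; simpl; auto. rewrite IHk, E. auto. Qed.

Lemma rsum_le n h1 h2 : (forall k, h1 k <= h2 k) -> rsum n h1 <= rsum n h2.
Proof. intro E. induction n; simpl. lra. specialize (E n). lra. Qed.

Lemma rsum_abs n h : Rabs (rsum n h) <= rsum n (fun k => Rabs (h k)).
Proof.
  induction n; simpl. rewrite Rabs_R0; lra.
  eapply Rle_trans; [apply Rabs_triang|]. lra.
Qed.

Lemma rsum_young n u v t :
  rsum n (fun k => (t * u k + v k / t) / 2) = (t * rsum n u + rsum n v / t) / 2.
Proof. induction n; simpl. unfold Rdiv; ring. rewrite IHn. unfold Rdiv. ring. Qed.

Lemma isum_nonneg (s : nat -> R) l : (forall n, 0 <= s n) -> infinite_sum s l -> 0 <= l.
Proof.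
  intros Hs Hl. pose proof (sum_incr s 0 l Hl Hs) as P. simpl in P. specialize (Hs 0%nat). lra.
Qed.

Lemma rsum_le_lim (s : nat -> R) l n :
  (forall k, 0 <= s k) -> infinite_sum s l -> rsum n s <= l.
Proof.
  intros Hs Hl. destruct n.
  - simpl. eapply isum_nonneg; eauto.
  - rewrite rsum_S. apply sum_incr; auto.
Qed.

Lemma term_le_lim (s : nat -> R) l k :
  (forall k, 0 <= s k) -> infinite_sum s l -> s k <= l.
Proof.
  intros Hs Hl. pose proof (rsum_le_lim s l (S k) Hs Hl) as P. simpl in P.
  pose proof (rsum_nonneg s k Hs). lra.
Qed.

Lemma isum_ext (s t : nat -> R) l :
  (forall n, s n = t n) -> infinite_sum s l -> infinite_sum t l.
Proof.
  intros E Hl eps He. destruct (Hl eps He) as [M HM]. exists M. intros n Hn.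
  rewrite <- (sum_eq s t n) by (intros; auto). auto.
Qed.

Lemma isum_scal (s : nat -> R) l c :
  infinite_sum s l -> infinite_sum (fun n => c * s n) (c * l).
Proof.
  intros Hl eps He. pose proof (Rabs_pos c) as Pc.
  destruct (Hl (eps / (Rabs c + 1))) as [M HM]; [apply Rdiv_lt_0_compat; lra|].
  exists M. intros n Hn. specialize (HM n Hn).
  assert (E : sum_f_R0 (fun n => c * s n) n = c * sum_f_R0 s n).
  { clear. induction n; simpl; auto. rewrite IHn. ring. }
  rewrite E. unfold Rdist in *.
  replace (c * sum_f_R0 s n - c * l) with (c * (sum_f_R0 s n - l)) by ring.
  rewrite Rabs_mult. pose proof (Rabs_pos (sum_f_R0 s n - l)).
  assert (Rabs c * Rabs (sum_f_R0 s n - l) <= Rabs c * (eps / (Rabs c + 1)))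
    by (apply Rmult_le_compat_l; lra).
  assert (Rabs c * (eps / (Rabs c + 1)) < eps).
  { apply (Rmult_lt_reg_r (Rabs c + 1)). lra. field_simplify; lra. }
  lra.
Qed.

Lemma isum_cons (s : nat -> R) l :
  infinite_sum (fun n => s (S n)) l -> infinite_sum s (s O + l).
Proof.
  intros Hl eps He. destruct (Hl eps He) as [M HM]. exists (S M). intros n Hn.
  destruct n; [lia|].
  assert (E : sum_f_R0 s (S n) = s O + sum_f_R0 (fun k => s (S k)) n).
  { clear. induction n; [simpl; ring|].
    replace (sum_f_R0 s (S (S n))) with (sum_f_R0 s (S n) + s (S (S n))) by reflexivity.
    rewrite IHn. simpl. ring. }
  rewrite E. unfold Rdist in *.
  replace (s O + sum_f_R0 (fun k => s (S k)) n - (s O + l))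
    with (sum_f_R0 (fun k => s (S k)) n - l) by ring.
  apply HM. lia.
Qed.

Lemma isum_zero : infinite_sum (fun _ => 0) 0.
Proof.
  intros eps He. exists O. intros n _. unfold Rdist.
  assert (E : sum_f_R0 (fun _ => 0) n = 0) by (induction n; simpl; auto; lra).
  rewrite E. rewrite Rminus_0_r, Rabs_R0. lra.
Qed.

Definition Sum (s : nat -> R) : R := epsilon (inhabits 0) (fun l => infinite_sum s l).

Lemma Sum_spec (s : nat -> R) : (exists l, infinite_sum s l) -> infinite_sum s (Sum s).
Proof. intro E. unfold Sum. apply epsilon_spec. exact E. Qed.

Lemma Sum_eq (s : nat -> R) l : infinite_sum s l -> Sum s = l.
Proof. intro E. eapply uniqueness_sum; [apply Sum_spec; eauto | exact E]. Qed.

Section FrameEnergy.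
Context {H : CHilbert}.

Definition Sa (a : nat -> H) (x : H) : R := Sum (fun n => Cnorm2 (hinner x (a n))).

Definition summable (a : nat -> H) : Prop :=
  forall x : H, exists l, infinite_sum (fun n => Cnorm2 (hinner x (a n))) l.

Definition in_kernel (a : nat -> H) (z : H) : Prop := forall k, hinner z (a k) = C0.

Lemma Sa_spec a x : summable a -> infinite_sum (fun n => Cnorm2 (hinner x (a n))) (Sa a x).
Proof. intro S. apply Sum_spec. apply S. Qed.

Lemma coord_le_Sa a x k : summable a -> Cnorm2 (hinner x (a k)) <= Sa a x.
Proof.
  intro S. apply (term_le_lim (fun n => Cnorm2 (hinner x (a n)))); [|apply Sa_spec; auto].
  intro; apply Cnorm2_nonneg.
Qed.

Lemma Sa_rs a l x : summable a -> Sa a (rs l x) = l * l * Sa a x.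
Proof.
  intro S. unfold Sa at 1. apply Sum_eq.
  eapply isum_ext; [|apply isum_scal; apply Sa_spec; auto].
  intro n. simpl. rewrite Cnorm2_rs_l. ring.
Qed.

Lemma Sa_in_kernel (a : nat -> H) z : in_kernel a z -> Sa a z = 0.
Proof.
  intro Hz. unfold Sa. apply Sum_eq. eapply isum_ext; [|apply isum_zero].
  intro k. simpl. rewrite Hz. unfold Cnorm2, C0; simpl; ring.
Qed.

Lemma Sa_sub_kernel (a : nat -> H) x p :
  summable a -> in_kernel a p -> Sa a (hsub x p) = Sa a x.
Proof.
  intros S Hp. apply Sum_eq. eapply isum_ext; [|apply (Sa_spec a x S)]. intro k. simpl.
  unfold hsub. rewrite hinner_add_l, hinner_opp_l, Hp. f_equal. apply C_ext; simpl; ring.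
Qed.

Lemma bessel_summable a B0 : bessel_bound H a B0 -> summable a.
Proof. intros [_ Hb] x. destruct (Hb x) as [l [Hl _]]. eauto. Qed.

Lemma bessel_Sa a B0 x : bessel_bound H a B0 -> Sa a x <= B0 * N x.
Proof.
  intros Hb. destruct Hb as [_ Hb].
  destruct (Hb x) as [l [Hl Hle]]. unfold Sa. rewrite (Sum_eq _ l Hl).
  rewrite hnorm_sq in Hle. exact Hle.
Qed.

Lemma bessel_of_Sa a B0 :
  summable a -> B0 > 0 -> (forall x, Sa a x <= B0 * N x) -> bessel_bound H a B0.
Proof.
  intros S HB0 Hle. split; auto. intro x. exists (Sa a x). split.
  - apply Sa_spec, S.
  - rewrite hnorm_sq. apply Hle.
Qed.

Lemma optimal_nonneg a B : is_glb (bessel_bound H a) B -> 0 <= B.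
Proof. intros [_ G]. apply G. intros x [Hx _]. lra. Qed.

Lemma optimal_Sa a B x : is_bessel H a -> is_glb (bessel_bound H a) B -> Sa a x <= B * N x.
Proof.
  intros [B0 HB0] [_ G].
  destruct (Req_dec (N x) 0) as [Z|Z].
  - apply N_zero in Z. subst x. rewrite N_hzero, Sa_in_kernel; [lra|].
    intro k. apply hinner_zero_l.
  - assert (Np : N x > 0) by (pose proof (N_nonneg x); lra).
    assert (Quot : Sa a x / N x <= B).
    { apply G. intros B1 HB1. pose proof (bessel_Sa a B1 x HB1).
      apply (Rmult_le_reg_r (N x)); auto. field_simplify; lra. }
    apply (Rmult_le_compat_r (N x)) in Quot; [|lra].
    replace (Sa a x / N x * N x) with (Sa a x) in Quot by (field; lra). lra.
Qed.

End FrameEnergy.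

Section Control.
Context {H : CHilbert}.

Definition controlled (a : nat -> H) (T : H -> H) (c1 c2 : R) : Prop :=
  forall x y, N (hsub x y) <= c1 * N (hsub (T x) (T y)) + c2 * (Sa a x + Sa a y).

Lemma controlled_mono (a b : nat -> H) T c1 c2 :
  0 <= c2 -> (forall x, Sa a x <= Sa b x) -> controlled a T c1 c2 -> controlled b T c1 c2.
Proof.
  intros Hc2 Hab Hc x y. specialize (Hc x y). pose proof (Hab x). pose proof (Hab y).
  assert (c2 * (Sa a x + Sa a y) <= c2 * (Sa b x + Sa b y)) by (apply Rmult_le_compat_l; lra).
  lra.
Qed.

Lemma lincomb_Re (c : nat -> C) (g : nat -> H) y n :
  Re (hinner (lincomb H n c g) y) = rsum n (fun k => Re (Cmul (c k) (hinner (g k) y))).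
Proof.
  induction n; simpl. rewrite hinner_zero_l. reflexivity.
  rewrite hinner_add_l, hinner_scal_l. simpl. rewrite IHn. reflexivity.
Qed.

Lemma partial_synthesis_young (f g : nat -> H) x y t n :
  summable f -> summable g -> t > 0 ->
  Rabs (Re (hinner (lincomb H n (analysis H f x) g) y)) <= (t * Sa f x + Sa g y / t) / 2.
Proof.
  intros Sf Sg ht. rewrite lincomb_Re. eapply Rle_trans; [apply rsum_abs|].
  eapply Rle_trans; [apply rsum_le; intro k; apply (Re_Cmul_young _ _ t ht)|].
  rewrite rsum_young.
  assert (rsum n (fun k => Cnorm2 (analysis H f x k)) <= Sa f x).
  { apply rsum_le_lim; [intro; apply Cnorm2_nonneg|]. apply Sa_spec; auto. }
  assert (rsum n (fun k => Cnorm2 (hinner (g k) y)) <= Sa g y).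
  { apply rsum_le_lim; [intro; apply Cnorm2_nonneg|].
    eapply isum_ext; [|apply (Sa_spec g y Sg)]. intro k. simpl.
    rewrite (hinner_conj _ (g k) y), Cnorm2_conj. reflexivity. }
  assert (/ t > 0) by (apply Rinv_0_lt_compat; lra).
  unfold Rdiv in *. nra.
Qed.

Lemma synthesis_young (f g : nat -> H) (T : H -> H)
  (Hsyn : forall x, synthesis_is H g (analysis H f x) (hsub x (T x)))
  (Sf : summable f) (Sg : summable g) x y t (ht : t > 0) :
  Rabs (Re (hinner (hsub x (T x)) y)) <= (t * Sa f x + Sa g y / t) / 2.
Proof.
  set (bnd := (t * Sa f x + Sa g y / t) / 2).
  set (z := hsub x (T x)).
  apply Rnot_lt_le. intro Hc.
  set (d := Rabs (Re (hinner z y)) - bnd).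
  assert (dpos : d > 0) by (unfold d; lra).
  pose proof (sqrt_pos (N y)) as sp.
  destruct (Hsyn x (d / (sqrt (N y) + 1))) as [M HM]; [apply Rdiv_lt_0_compat; lra|].
  specialize (HM M (le_n _)). fold z in HM.
  set (zM := lincomb H M (analysis H f x) g) in *.
  pose proof (partial_synthesis_young f g x y t M Sf Sg ht) as Hpart.
  fold zM bnd in Hpart.
  pose proof (cauchy_schwarz (hsub zM z) y) as Hcs.
  assert (Split : Re (hinner z y) = Re (hinner zM y) - Re (hinner (hsub zM z) y))
    by (ipsimpl; ring).
  assert (Small : sqrt (N (hsub zM z)) * sqrt (N y) < d).
  { assert (sqrt (N (hsub zM z)) * sqrt (N y) <= d / (sqrt (N y) + 1) * sqrt (N y)).
    { apply Rmult_le_compat_r; auto. unfold hnorm in HM. fold (N (hsub zM z)) in HM. lra. }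
    assert (d / (sqrt (N y) + 1) * sqrt (N y) < d).
    { apply (Rmult_lt_reg_r (sqrt (N y) + 1)); [lra|].
      replace (d / (sqrt (N y) + 1) * sqrt (N y) * (sqrt (N y) + 1)) with (d * sqrt (N y))
        by (field; lra).
      nra. }
    lra. }
  assert (Rabs (Re (hinner z y)) <= Rabs (Re (hinner zM y)) + Rabs (Re (hinner (hsub zM z) y))).
  { rewrite Split. unfold Rminus. eapply Rle_trans; [apply Rabs_triang|]. rewrite Rabs_Ropp. lra. }
  unfold d in *. lra.
Qed.

(* The control estimate by the energy of f, with constant 4 D0 for a Bessel
   bound D0 of g: polarise ||x - y||^2 through x - Tx, y - Ty and Tx - Ty. *)
Lemma controlled_analysis (f g : nat -> H) (T : H -> H) D0
  (Hsyn : forall x, synthesis_is H g (analysis H f x) (hsub x (T x)))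
  (Sf : summable f) (Hg : bessel_bound H g D0) :
  controlled f T 2 (4 * D0).
Proof.
  intros x y.
  assert (Sg : summable g) by (eapply bessel_summable; eauto).
  assert (D0p : D0 > 0) by apply Hg.
  set (d := hsub x y).
  assert (Id : Re (hinner d d) = Re (hinner (hsub x (T x)) d) - Re (hinner (hsub y (T y)) d)
                                  + Re (hinner (hsub (T x) (T y)) d))
    by (unfold d; ipsimpl; lra).
  assert (W : forall z, Rabs (Re (hinner (hsub z (T z)) d)) <= 2 * D0 * Sa f z + N d / 8).
  { intro z. pose proof (synthesis_young f g T Hsyn Sf Sg z d (4 * D0)) as Wz.
    pose proof (bessel_Sa g D0 d Hg).
    assert (Sa g d / (4 * D0) <= N d / 4).
    { unfold Rdiv. apply (Rmult_le_reg_r (4 * D0)). lra.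
      rewrite Rmult_assoc, Rinv_l, Rmult_1_r by lra. lra. }
    eapply Rle_trans. apply Wz. lra. lra. }
  pose proof (W x) as Wx. pose proof (W y) as Wy.
  apply Rabs_le_inv in Wx. apply Rabs_le_inv in Wy.
  pose proof (Re_inner_le (hsub (T x) (T y)) d).
  change (N d <= 2 * N (hsub (T x) (T y)) + 4 * D0 * (Sa f x + Sa f y)).
  change (Re (hinner d d)) with (N d) in Id. lra.
Qed.

(* The control estimate by the energy of g, with constant 4 B0 for a Bessel
   bound B0 of f: test x - y against d - Td, using linearity of T. *)
Lemma controlled_synthesis (f g : nat -> H) (T : H -> H) B0
  (Hsyn : forall x, synthesis_is H g (analysis H f x) (hsub x (T x)))
  (Hf : bessel_bound H f B0) (Sg : summable g) (Tl : linear_op H T) :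
  controlled g T 2 (4 * B0).
Proof.
  intros x y.
  assert (Sf : summable f) by (eapply bessel_summable; eauto).
  assert (B0p : B0 > 0) by apply Hf.
  set (d := hsub x y).
  assert (ETd : T d = hsub (T x) (T y)) by (apply linear_sub; auto).
  assert (Id : Re (hinner d d) = Re (hinner (hsub d (T d)) x) - Re (hinner (hsub d (T d)) y)
                                  + Re (hinner (T d) d))
    by (unfold d; ipsimpl; lra).
  assert (W : forall z, Rabs (Re (hinner (hsub d (T d)) z)) <= N d / 8 + 2 * B0 * Sa g z).
  { intro z. pose proof (synthesis_young f g T Hsyn Sf Sg d z (/ (4 * B0))) as Wz.
    pose proof (bessel_Sa f B0 d Hf).
    assert (/ (4 * B0) * Sa f d <= N d / 4).
    { apply (Rmult_le_reg_l (4 * B0)). lra.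
      rewrite <- Rmult_assoc, Rinv_r, Rmult_1_l by lra. lra. }
    eapply Rle_trans. apply Wz. apply Rinv_0_lt_compat; lra.
    unfold Rdiv. rewrite Rinv_inv. lra. }
  pose proof (W x) as Wx. pose proof (W y) as Wy.
  apply Rabs_le_inv in Wx. apply Rabs_le_inv in Wy.
  pose proof (Re_inner_le (T d) d).
  rewrite ETd in *.
  change (N d <= 2 * N (hsub (T x) (T y)) + 4 * B0 * (Sa g x + Sa g y)).
  change (Re (hinner d d)) with (N d) in Id. lra.
Qed.

End Control.

Lemma incr_ge (phi : nat -> nat) :
  (forall n, (phi n < phi (S n))%nat) -> forall n, (n <= phi n)%nat.
Proof. intros I n. induction n. lia. specialize (I n). lia. Qed.

Section Compactness.
Context {H : CHilbert}.

Definition compact_image (T : H -> H) : Prop :=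
  forall u : nat -> H, hbounded H u ->
    exists (phi : nat -> nat) (l : H),
      (forall n, (phi n < phi (S n))%nat) /\ hconverges H (fun n => T (u (phi n))) l.

(* [s n] tends to 0 (for nonnegative sequences). *)
Definition vanishes (s : nat -> R) : Prop :=
  forall eps, eps > 0 -> exists M, forall n, (M <= n)%nat -> s n < eps.

Lemma vanishes_subseq (s : nat -> R) (phi : nat -> nat) :
  (forall n, (phi n < phi (S n))%nat) -> vanishes s -> vanishes (fun n => s (phi n)).
Proof.
  intros Iphi Hs eps He. destruct (Hs eps He) as [M HM]. exists M. intros n Hn.
  apply HM. pose proof (incr_ge phi Iphi n). lia.
Qed.

Variables (a : nat -> H) (Ba : R) (T : H -> H) (c1 c2 : R).
Hypothesis HBa : bessel_bound H a Ba.
Hypothesis Tc : compact_image T.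
Hypotheses (c1p : 0 <= c1) (c2p : 0 <= c2).
Hypothesis Hcontrol : controlled a T c1 c2.

Lemma controlled_cauchy (v : nat -> H) (l : H) :
  hconverges H (fun n => T (v n)) l -> vanishes (fun n => Sa a (v n)) ->
  forall eps, eps > 0 -> exists M, forall m n, (M <= m)%nat -> (M <= n)%nat ->
    hnorm (hsub (v m) (v n)) < eps.
Proof.
  intros Hconv HS eps He.
  set (dl := eps * eps / (4 * c1 + 2 * c2 + 1)).
  assert (dlp : dl > 0) by (unfold dl; apply Rdiv_lt_0_compat; nra).
  destruct (Hconv (sqrt dl)) as [M1 HM1]; [apply sqrt_lt_R0; auto|].
  destruct (HS dl dlp) as [M2 HM2].
  assert (Near : forall n, (M1 <= n)%nat -> N (hsub (T (v n)) l) < dl).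
  { intros n Hn. pose proof (hnorm_lt_inv _ _ (HM1 n Hn)) as E.
    rewrite sqrt_sqrt in E by lra. exact E. }
  exists (Nat.max M1 M2). intros m n Hm Hn. apply hnorm_lt; auto.
  pose proof (Hcontrol (v m) (v n)).
  pose proof (N_sub_via (T (v m)) (T (v n)) l).
  pose proof (Near m ltac:(lia)). pose proof (Near n ltac:(lia)).
  pose proof (HM2 m ltac:(lia)). pose proof (HM2 n ltac:(lia)).
  pose proof (N_nonneg (hsub (T (v m)) (T (v n)))).
  assert (c1 * N (hsub (T (v m)) (T (v n))) <= c1 * (4 * dl)) by (apply Rmult_le_compat_l; lra).
  assert (c2 * (Sa a (v m) + Sa a (v n)) <= c2 * (2 * dl)) by (apply Rmult_le_compat_l; lra).
  assert ((4 * c1 + 2 * c2) * dl < eps * eps).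
  { unfold dl. apply (Rmult_lt_reg_r (4 * c1 + 2 * c2 + 1)). lra.
    replace ((4 * c1 + 2 * c2) * (eps * eps / (4 * c1 + 2 * c2 + 1)) * (4 * c1 + 2 * c2 + 1))
      with ((4 * c1 + 2 * c2) * (eps * eps)) by (field; lra).
    nra. }
  lra.
Qed.

(* A limit of vectors with vanishing energies lies in the kernel, since
   |<x, a_k>|^2 <= 2 S_a (v_n) + 2 Ba ||x - v_n||^2. *)
Lemma limit_in_kernel (v : nat -> H) (x : H) :
  hconverges H v x -> vanishes (fun n => Sa a (v n)) -> in_kernel a x.
Proof.
  intros Hx HS k. apply Cnorm2_zero. apply Rnot_lt_le. intro G.
  set (gm := Cnorm2 (hinner x (a k))) in *.
  assert (Bap : Ba > 0) by apply HBa.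
  assert (Sa_summ : summable a) by (eapply bessel_summable; eauto).
  destruct (Hx (sqrt (gm / (8 * Ba)))) as [M1 HM1].
  { apply sqrt_lt_R0. apply Rdiv_lt_0_compat; lra. }
  destruct (HS (gm / 8)) as [M2 HM2]; [lra|].
  set (n := Nat.max M1 M2).
  pose proof (hnorm_lt_inv _ _ (HM1 n ltac:(lia))) as E1.
  rewrite sqrt_sqrt in E1 by (apply Rlt_le, Rdiv_lt_0_compat; lra).
  pose proof (HM2 n ltac:(lia)) as E2. simpl in E2.
  pose proof (coord_le_Sa a (v n) k Sa_summ) as C1.
  pose proof (coord_le_Sa a (hsub x (v n)) k Sa_summ) as C2.
  pose proof (bessel_Sa a Ba (hsub x (v n)) HBa) as C3.
  rewrite N_sub_sym in C3.
  assert (Ba * N (hsub (v n) x) <= Ba * (gm / (8 * Ba))) by (apply Rmult_le_compat_l; lra).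
  replace (Ba * (gm / (8 * Ba))) with (gm / 8) in * by (field; lra).
  assert (gm <= 2 * Cnorm2 (hinner (v n) (a k)) + 2 * Cnorm2 (hinner (hsub x (v n)) (a k))).
  { unfold gm, Cnorm2. ipsimpl.
    set (X := Re (hinner x (a k))). set (Y := Im (hinner x (a k))).
    set (p := Re (hinner (v n) (a k))). set (q := Im (hinner (v n) (a k))).
    pose proof (Rle_0_sqr (X - 2 * p)). pose proof (Rle_0_sqr (Y - 2 * q)). unfold Rsqr in *. nra. }
  lra.
Qed.

Lemma subseq_converges_to_kernel (u : nat -> H) :
  (forall n, N (u n) <= 1) -> vanishes (fun n => Sa a (u n)) ->
  exists (phi : nat -> nat) (x : H),
    hconverges H (fun n => u (phi n)) x /\ in_kernel a x.
Proof.
  intros Hb HS.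
  destruct (Tc u (bounded_of_N_le_1 u Hb)) as [phi [l [Iphi Hconv]]].
  pose proof (vanishes_subseq _ phi Iphi HS) as HSphi.
  destruct (hcomplete H (fun n => u (phi n)) (controlled_cauchy _ l Hconv HSphi)) as [x Hx].
  exists phi, x. split; [exact Hx|].
  exact (limit_in_kernel _ x Hx HSphi).
Qed.

(* The kernel contains no infinite orthonormal sequence: T would map it to a
   sequence with a convergent subsequence, while the control estimate keeps
   the images of distinct terms apart. *)
Lemma no_orthonormal_kernel_seq (E : nat -> H) :
  (forall n, N (E n) = 1) -> (forall n m, n <> m -> Re (hinner (E n) (E m)) = 0) ->
  (forall n, in_kernel a (E n)) -> False.
Proof.
  intros HN HO HK.
  assert (Hbd : hbounded H E) by (apply bounded_of_N_le_1; intro n; rewrite HN; lra).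
  destruct (Tc E Hbd) as [phi [l [Iphi Hconv]]].
  set (dl := 1 / (2 * c1 + 1)).
  assert (dlp : dl > 0) by (unfold dl; apply Rdiv_lt_0_compat; lra).
  destruct (Hconv (sqrt dl)) as [M HM]; [apply sqrt_lt_R0; auto|].
  pose proof (hnorm_lt_inv _ _ (HM M (le_n _))) as A1.
  pose proof (hnorm_lt_inv _ _ (HM (S M) (le_S _ _ (le_n _)))) as A2.
  rewrite sqrt_sqrt in A1, A2 by lra.
  pose proof (Hcontrol (E (phi M)) (E (phi (S M)))) as Hc.
  rewrite !Sa_in_kernel in Hc by auto.
  rewrite N_sub, !HN, HO in Hc by (specialize (Iphi M); lia).
  pose proof (N_sub_via (T (E (phi M))) (T (E (phi (S M)))) l).
  assert (c1 * N (hsub (T (E (phi M))) (T (E (phi (S M))))) <= c1 * (4 * dl))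
    by (apply Rmult_le_compat_l; lra).
  assert (c1 * (4 * dl) < 2).
  { unfold dl. apply (Rmult_lt_reg_r (2 * c1 + 1)). lra.
    replace (c1 * (4 * (1 / (2 * c1 + 1))) * (2 * c1 + 1)) with (4 * c1) by (field; lra). lra. }
  lra.
Qed.

End Compactness.

Section OrthonormalFamilies.
Context {H : CHilbert}.

Definition orthonormal_in_kernel (a : nat -> H) (n : nat) (e : nat -> H) : Prop :=
  (forall i, (i < n)%nat -> in_kernel a (e i) /\ N (e i) = 1) /\
  (forall i j, (i < n)%nat -> (j < n)%nat -> i <> j -> hinner (e i) (e j) = C0).

Definition maximal_in_kernel (a : nat -> H) (n : nat) (e : nat -> H) : Prop :=
  orthonormal_in_kernel a n e /\
  forall z, in_kernel a z -> (forall i, (i < n)%nat -> hinner z (e i) = C0) -> z = hzero.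

Definition proj (e : nat -> H) (m : nat) (x : H) : H :=
  lincomb H m (fun i => hinner x (e i)) e.

Lemma self_C1 (x : H) : N x = 1 -> hinner x x = C1.
Proof. intro E. apply C_ext. exact E. apply Im_self. Qed.

Lemma lincomb_orth (c : nat -> C) (e : nat -> H) v m :
  (forall i, (i < m)%nat -> hinner (e i) v = C0) -> hinner (lincomb H m c e) v = C0.
Proof.
  induction m; intro Hv; simpl. apply hinner_zero_l.
  rewrite hinner_add_l, hinner_scal_l, IHm by (intros; apply Hv; lia).
  rewrite (Hv m) by lia. apply C_ext; simpl; ring.
Qed.

Lemma lincomb_in_kernel (a : nat -> H) (c : nat -> C) (e : nat -> H) n :
  orthonormal_in_kernel a n e -> in_kernel a (lincomb H n c e).
Proof. intros Ho k. apply lincomb_orth. intros i Hi. apply (proj1 Ho i Hi). Qed.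

Lemma lincomb_coef a (c : nat -> C) (e : nat -> H) n (Ho : orthonormal_in_kernel a n e) m i :
  (m <= n)%nat -> (i < n)%nat ->
  hinner (lincomb H m c e) (e i) = if Nat.ltb i m then c i else C0.
Proof.
  induction m; intros Hm Hi; simpl. apply hinner_zero_l.
  rewrite hinner_add_l, hinner_scal_l, IHm by lia.
  destruct (Nat.eq_dec i m) as [->|Hne].
  - rewrite Nat.ltb_irrefl. replace (Nat.ltb m (S m)) with true by (symmetry; apply Nat.ltb_lt; lia).
    rewrite self_C1 by (apply (proj1 Ho); lia). apply C_ext; simpl; ring.
  - rewrite (proj2 Ho m i) by lia.
    destruct (Nat.ltb_spec i m); destruct (Nat.ltb_spec i (S m)); try lia;
      apply C_ext; simpl; ring.
Qed.

Lemma proj_coef a (e : nat -> H) n (Ho : orthonormal_in_kernel a n e) x i :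
  (i < n)%nat -> hinner (hsub x (proj e n x)) (e i) = C0.
Proof.
  intro Hi. unfold proj, hsub. rewrite hinner_add_l, hinner_opp_l, (lincomb_coef a _ e n Ho) by lia.
  replace (Nat.ltb i n) with true by (symmetry; apply Nat.ltb_lt; auto).
  apply C_ext; simpl; ring.
Qed.

Lemma bessel_identity a (e : nat -> H) n (Ho : orthonormal_in_kernel a n e) (x : H) m :
  (m <= n)%nat ->
  N (hsub x (proj e m x)) = N x - rsum m (fun i => Cnorm2 (hinner x (e i))).
Proof.
  unfold proj. induction m; intro Hm; simpl.
  - unfold N. ipsimpl. ring.
  - set (p := lincomb H m (fun i => hinner x (e i)) e) in *.
    specialize (IHm ltac:(lia)).
    assert (Hpe : hinner p (e m) = C0).
    { unfold p. rewrite (lincomb_coef a _ e n Ho) by lia. rewrite Nat.ltb_irrefl. reflexivity. }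
    assert (Hep : hinner (e m) p = C0).
    { rewrite hinner_conj, Hpe. apply C_ext; simpl; ring. }
    assert (Hee : hinner (e m) (e m) = C1) by (apply self_C1; apply (proj1 Ho); lia).
    rewrite N_sub in IHm.
    pose proof (Re_sym x (e m)) as R1. pose proof (Im_sym x (e m)) as I1.
    pose proof (Re_sym x p). pose proof (Im_sym x p).
    unfold N, Cnorm2 in *. ipsimpl. rewrite ?Hpe, ?Hep, ?Hee. simpl.
    rewrite R1, I1. lra.
Qed.

Lemma maximal_expansion a (e : nat -> H) n x :
  maximal_in_kernel a n e -> in_kernel a x -> x = proj e n x.
Proof.
  intros [Ho Hmax] Hx. apply hsub_eq_zero, Hmax.
  - intro k. unfold hsub, proj. rewrite hinner_add_l, hinner_opp_l, Hx.
    rewrite (lincomb_in_kernel a _ e n Ho k). apply C_ext; simpl; ring.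
  - intros i Hi. apply (proj_coef a e n Ho x i Hi).
Qed.

(* Gram-Schmidt-style recursion: [extend_seq nxt m] is the family of length m
   obtained by appending [nxt m' (previous family)] at each step. *)
Definition extend_seq (nxt : nat -> (nat -> H) -> H) : nat -> nat -> H :=
  fix F m := match m with
             | O => fun _ => hzero
             | S m' => fun i => if Nat.eqb i m' then nxt m' (F m') else F m' i
             end.

Lemma extend_seq_stable nxt m i : (i < m)%nat -> extend_seq nxt m i = extend_seq nxt (S i) i.
Proof.
  induction m; intro Hi. lia.
  simpl. destruct (Nat.eqb_spec i m). subst. simpl. rewrite Nat.eqb_refl. reflexivity.
  apply IHm. lia.
Qed.

Lemma extend_orthonormal a n e :
  orthonormal_in_kernel a n e -> ~ maximal_in_kernel a n e ->
  exists z, in_kernel a z /\ N z = 1 /\ forall i, (i < n)%nat -> hinner z (e i) = C0.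
Proof.
  intros Ho Hnm.
  assert (exists z, in_kernel a z /\ (forall i, (i < n)%nat -> hinner z (e i) = C0) /\ z <> hzero)
    as [z [Hz [Hze Hz0]]].
  { apply NNPP. intro Hno. apply Hnm. split; auto. intros z Hz Hze.
    apply NNPP. intro Hz0. apply Hno. eauto. }
  destruct (normalize z Hz0) as [l [_ Hl]]. exists (rs l z). split; [|split]; auto.
  - intro k. unfold rs. rewrite hinner_scal_l, Hz. apply C_ext; simpl; ring.
  - intros i Hi. unfold rs. rewrite hinner_scal_l, Hze by auto. apply C_ext; simpl; ring.
Qed.

Lemma extend_seq_orthonormal a (nxt : nat -> (nat -> H) -> H) :
  (forall n e, orthonormal_in_kernel a n e ->
     in_kernel a (nxt n e) /\ N (nxt n e) = 1 /\
     forall i, (i < n)%nat -> hinner (nxt n e) (e i) = C0) ->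
  forall m, orthonormal_in_kernel a m (extend_seq nxt m).
Proof.
  intros Hnxt m. induction m as [|m IHm].
  - split; intros; lia.
  - destruct (Hnxt m _ IHm) as [N1 [N2 N3]].
    assert (Fv : forall i, extend_seq nxt (S m) i
                           = if Nat.eqb i m then nxt m (extend_seq nxt m) else extend_seq nxt m i)
      by reflexivity.
    split.
    + intros i Hi. rewrite Fv. destruct (Nat.eqb_spec i m); auto. apply (proj1 IHm). lia.
    + intros i j Hi Hj Hij. rewrite !Fv.
      destruct (Nat.eqb_spec i m); destruct (Nat.eqb_spec j m); try lia.
      * apply N3. lia.
      * rewrite hinner_conj, N3 by lia. apply C_ext; simpl; ring.
      * apply (proj2 IHm); lia.
Qed.

(* Under the hypotheses of the compactness section the kernel is finite
   dimensional: otherwise extending orthonormal families forever would give an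
   infinite orthonormal sequence in the kernel. *)
Lemma exists_maximal_family (a : nat -> H) (T : H -> H) c1 c2 :
  compact_image T -> 0 <= c1 -> controlled a T c1 c2 ->
  exists n e, maximal_in_kernel a n e.
Proof.
  intros Tc c1p Hcontrol. apply NNPP. intro Hno.
  set (P := fun n e z => orthonormal_in_kernel a n e ->
              in_kernel a z /\ N z = 1 /\ forall i, (i < n)%nat -> hinner z (e i) = C0).
  assert (Ext : forall n e, exists z, P n e z).
  { intros n e. destruct (classic (orthonormal_in_kernel a n e)) as [Ho|Ho].
    - destruct (extend_orthonormal a n e Ho) as [z Hz]; [intro Hm; apply Hno; eauto|]. exists z. intros _. exact Hz.
    - exists hzero. intro. contradiction. }
  set (nxt := fun n e => epsilon (inhabits hzero) (P n e)).
  assert (Hnxt : forall n e, P n e (nxt n e)) by (intros n e; apply epsilon_spec, Ext).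
  pose proof (extend_seq_orthonormal a nxt Hnxt) as FON.
  set (E := fun i => extend_seq nxt (S i) i).
  assert (HE : forall i m, (i < m)%nat -> E i = extend_seq nxt m i).
  { intros i m Hi. unfold E. symmetry. apply extend_seq_stable. auto. }
  apply (no_orthonormal_kernel_seq a T c1 c2 Tc c1p Hcontrol E).
  - intro n. apply (proj1 (FON (S n))). lia.
  - intros n m Hnm. rewrite (HE n (S (Nat.max n m))), (HE m (S (Nat.max n m))) by lia.
    rewrite (proj2 (FON (S (Nat.max n m)))) by lia. reflexivity.
  - intro n. apply (proj1 (FON (S n))). lia.
Qed.

End OrthonormalFamilies.

Section LowerBound.
Context {H : CHilbert}.

Lemma inv_succ_vanishes : vanishes (fun k => 1 / (INR k + 1)).
Proof.
  intros eps He. destruct (archimed_cor1 eps He) as [M [HM M0]].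
  exists M. intros k Hk. apply le_INR in Hk. assert (0 < INR M) by (apply lt_0_INR; auto).
  unfold Rdiv. rewrite Rmult_1_l. eapply Rle_lt_trans; [|exact HM].
  apply Rinv_le_contravar; lra.
Qed.

Lemma unit_vectors_small_energy (a : nat -> H) :
  summable a -> ~ (exists A, lower_frame_bound H a A) ->
  forall k, exists y, N y = 1 /\ Sa a y < 1 / (INR k + 1).
Proof.
  intros Sa_summ NL k. pose proof (pos_INR k) as Pk.
  set (r := 1 / (INR k + 1)).
  assert (rp : r > 0) by (unfold r; apply Rdiv_lt_0_compat; lra).
  assert (exists x, Sa a x < r * N x) as [x Hx].
  { apply NNPP. intro Hno. apply NL. exists r. split; auto.
    intro x. exists (Sa a x). split; [apply Sa_spec; auto|]. rewrite hnorm_sq.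
    apply Rnot_lt_le. intro Hlt. apply Hno. eauto. }
  assert (Hx0 : x <> hzero).
  { intro Z. subst x. rewrite N_hzero, Sa_in_kernel in Hx; [lra|].
    intro j. apply hinner_zero_l. }
  destruct (normalize x Hx0) as [l [Hl0 Hl]]. exists (rs l x). split; auto.
  rewrite Sa_rs by auto. rewrite N_rs in Hl.
  assert (0 < l * l) by (pose proof (Rsqr_pos_lt l Hl0); unfold Rsqr in *; lra).
  replace r with (r * (l * l * N x)) by (rewrite Hl; ring).
  replace (r * (l * l * N x)) with (l * l * (r * N x)) by ring.
  apply Rmult_lt_compat_l; auto.
Qed.

(* A Bessel sequence controlled by a compact T whose analysis operator is
   injective is a frame: unit vectors of vanishing energy would have a
   subsequence converging into the (trivial) kernel, i.e. to 0. *)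
Lemma lower_bound_of_trivial_kernel (a : nat -> H) Ba (T : H -> H) c1 c2 :
  bessel_bound H a Ba -> compact_image T -> 0 <= c1 -> 0 <= c2 -> controlled a T c1 c2 ->
  (forall z, in_kernel a z -> z = hzero) ->
  exists A, lower_frame_bound H a A.
Proof.
  intros HBa Tc c1p c2p Hcontrol Hker. apply NNPP. intro NL.
  pose proof (unit_vectors_small_energy a (bessel_summable a Ba HBa) NL) as Ex.
  set (u := fun k => epsilon (inhabits hzero) (fun y => N y = 1 /\ Sa a y < 1 / (INR k + 1))).
  assert (Hu : forall k, N (u k) = 1 /\ Sa a (u k) < 1 / (INR k + 1))
    by (intro k; apply epsilon_spec, Ex).
  destruct (subseq_converges_to_kernel a Ba T c1 c2 HBa Tc c1p c2p Hcontrol u)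
    as [phi [x [Hconv Hx]]].
  - intro k. rewrite (proj1 (Hu k)). lra.
  - intros eps He. destruct (inv_succ_vanishes eps He) as [M HM].
    exists M. intros k Hk. eapply Rlt_trans; [apply Hu|]. apply HM, Hk.
  - rewrite (Hker x Hx) in Hconv.
    destruct (Hconv (1 / 2)) as [M HM]; [lra|].
    pose proof (hnorm_lt_inv _ _ (HM M (le_n _))) as Small.
    pose proof (N_sub_le (u (phi M)) hzero) as Le.
    rewrite (proj1 (Hu _)), N_hzero in Le. lra.
Qed.

End LowerBound.

Section Prepend.
Context {H : CHilbert}.

Definition fsum (x : H) (xs : list H) : R :=
  fold_right (fun v acc => Cnorm2 (hinner x v) + acc) 0 xs.

Lemma prepend_sum (f : nat -> H) (Sf : summable f) x xs :
  infinite_sum (fun m => Cnorm2 (hinner x (prepend H xs f m))) (fsum x xs + Sa f x).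
Proof.
  induction xs as [|v xs IH]; simpl.
  - eapply isum_ext; [|rewrite Rplus_0_l; apply Sa_spec; auto].
    intro m. unfold prepend. simpl. rewrite Nat.sub_0_r. reflexivity.
  - rewrite Rplus_assoc. apply isum_cons.
    eapply isum_ext; [|exact IH]. intro m. reflexivity.
Qed.

Lemma Sa_prepend (f : nat -> H) xs x :
  summable f -> Sa (prepend H xs f) x = fsum x xs + Sa f x.
Proof. intro Sf. apply Sum_eq, prepend_sum, Sf. Qed.

Lemma summable_prepend (f : nat -> H) xs : summable f -> summable (prepend H xs f).
Proof. intros Sf x. exists (fsum x xs + Sa f x). apply prepend_sum, Sf. Qed.

Lemma prepend_head (f : nat -> H) xs i : (i < length xs)%nat -> prepend H xs f i = nth i xs hzero.
Proof. intro Hi. unfold prepend. replace (Nat.ltb i (length xs)) with true; auto.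
  symmetry. apply Nat.ltb_lt, Hi. Qed.

Lemma prepend_tail (f : nat -> H) xs k : prepend H xs f (k + length xs)%nat = f k.
Proof.
  unfold prepend. replace (Nat.ltb (k + length xs) (length xs)) with false
    by (symmetry; apply Nat.ltb_ge; lia).
  f_equal. lia.
Qed.

Lemma fsum_map (x : H) (h : nat -> H) k j :
  fsum x (map h (seq j k)) = rsum k (fun i => Cnorm2 (hinner x (h (j + i)%nat))).
Proof.
  revert j. induction k; intro j. reflexivity.
  change (fsum x (map h (seq j (S k))))
    with (Cnorm2 (hinner x (h j)) + fsum x (map h (seq (S j) k))).
  rewrite IHk, rsum_shift, Nat.add_0_r. f_equal.
  apply rsum_ext. intro i. do 3 f_equal. lia.
Qed.

Lemma nth_map_seq (h : nat -> H) k j i d :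
  (i < k)%nat -> nth i (map h (seq j k)) d = h (j + i)%nat.
Proof.
  revert i j. induction k; intros i j Hi. lia. simpl. destruct i.
  - rewrite Nat.add_0_r. reflexivity.
  - rewrite IHk by lia. f_equal. lia.
Qed.

End Prepend.

(* Prepending sqrt B e_0, ..., sqrt B e_(n-1), where e is a maximal
   orthonormal family in the kernel of f and B the optimal bound of f. *)
Section Extension.
Context {H : CHilbert}.

Definition scaled_family (s : R) (n : nat) (e : nat -> H) : list H :=
  map (fun i => rs s (e i)) (seq 0 n).

Variables (f : nat -> H) (B : R) (n : nat) (e : nat -> H).
Hypothesis Hf : is_bessel H f.
Hypothesis HB : is_glb (bessel_bound H f) B.
Hypothesis Hmax : maximal_in_kernel f n e.

Let xs := scaled_family (sqrt B) n e.
Let ext := prepend H xs f.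

Lemma summable_f : summable f.
Proof. destruct Hf as [Bf HBf]. exact (bessel_summable f Bf HBf). Qed.

(* If B = 0 every vector lies in the kernel, which is spanned by e: this
   contradicts infinite dimensionality. *)
Lemma optimal_bound_pos : infinite_dimensional H -> B > 0.
Proof.
  intro Hinf. pose proof (optimal_nonneg f B HB).
  destruct (Req_dec B 0) as [E|E]; [|lra]. exfalso.
  assert (AllK : forall x, in_kernel f x).
  { intros x k. apply Cnorm2_zero. pose proof (coord_le_Sa f x k summable_f).
    pose proof (optimal_Sa f B x Hf HB). rewrite E in *. lra. }
  destruct (Hinf n e) as [x Hx].
  exact (Hx _ (maximal_expansion f e n x Hmax (AllK x))).
Qed.

Lemma Sa_extension x : Sa ext x = B * rsum n (fun i => Cnorm2 (hinner x (e i))) + Sa f x.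
Proof.
  unfold ext. rewrite Sa_prepend by apply summable_f. f_equal.
  unfold xs, scaled_family. rewrite fsum_map, <- rsum_scal.
  apply rsum_ext. intro i. rewrite Cnorm2_rs_r, sqrt_sqrt; [reflexivity|].
  apply (optimal_nonneg f B HB).
Qed.

Lemma extension_energy_ge x : Sa f x <= Sa ext x.
Proof.
  rewrite Sa_extension. pose proof (optimal_nonneg f B HB).
  pose proof (rsum_nonneg (fun i => Cnorm2 (hinner x (e i))) n (fun i => Cnorm2_nonneg _)).
  nra.
Qed.

(* Split x = P x + (x - P x) with P the projection onto span e: the energy of
   f only sees x - P x, whose square norm is ||x||^2 - sum |<x, e_i>|^2. *)
Lemma extension_upper x : Sa ext x <= B * N x.
Proof.
  destruct Hmax as [Ho _].
  rewrite Sa_extension.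
  rewrite <- (Sa_sub_kernel f x (proj e n x) summable_f (lincomb_in_kernel f _ e n Ho)).
  pose proof (optimal_Sa f B (hsub x (proj e n x)) Hf HB) as Le.
  rewrite (bessel_identity f e n Ho x n (le_n _)) in Le. nra.
Qed.

Lemma extension_kernel_trivial : B > 0 -> forall z, in_kernel ext z -> z = hzero.
Proof.
  intros Bp z Hz. destruct Hmax as [Ho Hm]. apply Hm.
  - intro k. rewrite <- (prepend_tail f xs k). apply Hz.
  - intros i Hi. assert (Len : length xs = n) by (unfold xs, scaled_family;
      rewrite length_map, length_seq; auto).
    pose proof (Hz i) as Hzi. unfold ext in Hzi.
    rewrite prepend_head in Hzi by lia.
    unfold xs, scaled_family in Hzi. rewrite nth_map_seq in Hzi by auto. simpl in Hzi.
    unfold rs in Hzi. rewrite hinner_scal_r in Hzi.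
    pose proof (sqrt_lt_R0 B Bp) as sp.
    pose proof (f_equal Re Hzi) as R1. pose proof (f_equal Im Hzi) as I1. simpl in R1, I1.
    apply C_ext; simpl; apply (Rmult_eq_reg_l (sqrt B)); lra.
Qed.

Lemma extension_bessel : B > 0 -> bessel_bound H ext B.
Proof.
  intro Bp. apply bessel_of_Sa; auto.
  - apply summable_prepend, summable_f.
  - apply extension_upper.
Qed.

(* B stays optimal: every bound for the extension is a bound for f. *)
Lemma extension_optimal : B > 0 -> is_glb (bessel_bound H ext) B.
Proof.
  intro Bp. split.
  - intros B' HB'. apply (proj1 HB). apply bessel_of_Sa; [apply summable_f|apply HB'|].
    intro x. pose proof (bessel_Sa ext B' x HB'). pose proof (extension_energy_ge x). lra.
  - intros m' Hm'. apply Hm', extension_bessel, Bp.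
Qed.

End Extension.

Lemma finite_extension_to_frame (H : CHilbert) (f : nat -> H) B (T : H -> H) c1 c2 :
  infinite_dimensional H -> is_bessel H f -> is_glb (bessel_bound H f) B ->
  compact_image T -> 0 <= c1 -> 0 <= c2 -> controlled f T c1 c2 ->
  exists xs, is_frame H (prepend H xs f) /\ optimal_upper_frame_bound H (prepend H xs f) B.
Proof.
  intros Hinf Hf HB Tc c1p c2p Hcontrol.
  destruct (exists_maximal_family f T c1 c2 Tc c1p Hcontrol) as [n [e Hmax]].
  pose proof (optimal_bound_pos f B n e Hf HB Hmax Hinf) as Bp.
  set (ext := prepend H (scaled_family (sqrt B) n e) f).
  assert (Hext : bessel_bound H ext B) by exact (extension_bessel f B n e Hf HB Hmax Bp).
  exists (scaled_family (sqrt B) n e). split; [split|].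
  - apply (lower_bound_of_trivial_kernel ext B T c1 c2 Hext Tc c1p c2p).
    + exact (controlled_mono f ext T c1 c2 c2p (extension_energy_ge f B n e Hf HB) Hcontrol).
    + exact (extension_kernel_trivial f B n e Hmax Bp).
  - exists B. exact Hext.
  - exact (extension_optimal f B n e Hf HB Hmax Bp).
Qed.

Theorem theorem2p4 (H : CHilbert)
  (Hsep : separable H) (Hinf : infinite_dimensional H)
  (f g : nat -> H) (B D : R)
  (Hf : is_bessel H f) (Hg : is_bessel H g)
  (HB : optimal_bessel_bound H f B) (HD : optimal_bessel_bound H g D)
  (Hcpt : exists T : H -> H, compact_op H T /\
            (* T = I - V^* U, i.e. V^*U x = x - T x *)
            forall x : H, synthesis_is H g (analysis H f x) (hsub x (T x))) :
  exists (xs ys : list H),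
    is_frame H (prepend H xs f) /\ optimal_upper_frame_bound H (prepend H xs f) B /\
    is_frame H (prepend H ys g) /\ optimal_upper_frame_bound H (prepend H ys g) D.
Proof.
  destruct Hcpt as [T [[Tl Tc] Hsyn]].
  destruct Hf as [Bf HBf]. destruct Hg as [Bg HBg].
  assert (Bfp : Bf > 0) by apply HBf. assert (Bgp : Bg > 0) by apply HBg.
  pose proof (controlled_analysis f g T Bg Hsyn (bessel_summable f Bf HBf) HBg) as Cf.
  pose proof (controlled_synthesis f g T Bf Hsyn HBf (bessel_summable g Bg HBg) Tl) as Cg.
  destruct (finite_extension_to_frame H f B T 2 (4 * Bg) Hinf (ex_intro _ Bf HBf) HB Tc
              ltac:(lra) ltac:(lra) Cf) as [xs Hxs].
  destruct (finite_extension_to_frame H g D T 2 (4 * Bf) Hinf (ex_intro _ Bg HBg) HD Tc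
              ltac:(lra) ltac:(lra) Cg) as [ys Hys].
  exists xs, ys. tauto.
Qed.
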